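(* Let $(x_n,v_n)\subset GR$ and assume $(x_n,v_n)\to(x_0,v_0)$ in $TE^N=E^N\times E^N$. Then $x_0\in\Omega$.
   Context: $E=\mathbb R^d$, $d\ge2$; $N$ bodies with masses $m_i>0$; mass inner product $\langle x,y\rangle=\sum_i m_i(x_i,y_i)$ on $E^N$ with norm $\|\cdot\|$; $U(x)=\sum_{i<j}\frac{m_im_j}{|x_i-x_j|}$; $\Omega=\{x\in E^N: x_i\ne x_j,\ i\ne j\}$; Newton's equation $\ddot x=\nabla U(x)$; $T\Omega\simeq\Omega\times E^N$. $L(x,v)=\frac12\|v\|^2+U(x)$, $A_h(\gamma)=\int(L(\gamma,\dot\gamma)+h)dt$, $\phi_h(x,y)$ the infimum of $A_h$ over absolutely continuous curves from $x$ to $y$ on compact intervals. A geodesic ray of energy $h\ge0$ is a curve $\gamma:[0,\infty)\to\Omega$ with $A_h(\gamma|_{[s,t]})=\phi_h(\gamma(s),\gamma(t))$ for all $0\le s<t$ (equivalently, after reparametrization, a ray minimizing for the Jacobi–Maupertuis metric $2(h+U)\langle\cdot,\cdot\rangle$). $GR$ is the set of $(x,v)\in T\Omega$ such that the maximal classical solution of Newton's equation with initial datum $(x,v)$ is a geodesic ray; the energy of the datum is $\frac12\|v\|^2-U(x)$. *)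

From HB Require Import structures.
From mathcomp Require Import all_boot all_order all_algebra.
From mathcomp Require Import all_classical all_reals all_analysis.
Set Implicit Arguments. Unset Strict Implicit. Unset Printing Implicit Defensive.
Import Order.TTheory GRing.Theory Num.Theory.
Import numFieldNormedType.Exports.
Local Open Scope classical_set_scope.
Local Open Scope ring_scope.

(* A configuration of N bodies in E = R^d : body i, coordinate k. *)
Definition config (R : realType) (N d : nat) := 'I_N -> 'I_d -> R.

Section NBody.
Variables (R : realType) (N d : nat) (m : 'I_N -> R).

Definition edot (a b : 'I_d -> R) : R := \sum_(k < d) a k * b k.
Definition enorm (a : 'I_d -> R) : R := Num.sqrt (edot a a).

Definition mdot (x y : config R N d) : R := \sum_(i < N) m i * edot (x i) (y i).
Definition mnorm (x : config R N d) : R := Num.sqrt (mdot x x).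

Definition Omega : set (config R N d) :=
  [set x | forall i j : 'I_N, i != j -> x i != x j].

Definition dist_ij (x : config R N d) (i j : 'I_N) : R := enorm (fun k => x i k - x j k).

Definition Upot (x : config R N d) : R :=
  \sum_(i < N) \sum_(j < N | (i < j)%N) m i * m j / dist_ij x i j.

(* U as an extended real: +oo at collisions (the natural value of the sum) *)
Definition UpotE (x : config R N d) : \bar R :=
  if `[< Omega x >] then (Upot x)%:E else +oo%E.

(* Gradient of U with respect to the mass inner product, body i, coordinate k:
   (grad U)_i = (1/m_i) dU/dx_i = sum_{j<>i} m_j (x_j - x_i) / |x_i - x_j|^3 *)
Definition gradU (x : config R N d) (i : 'I_N) (k : 'I_d) : R :=
  \sum_(j < N | j != i) m j * (x j k - x i k) / (dist_ij x i j) ^+ 3.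

Definition vel (g : R -> config R N d) (t : R) : config R N d :=
  fun i k => derive1 (fun s => g s i k) t.

Definition acc (g : R -> config R N d) (t : R) : config R N d :=
  fun i k => derive1 (derive1 (fun s => g s i k)) t.

Definition abs_cont_on (f : R -> R) (a b : R) : Prop :=
  forall e : R, 0 < e -> exists2 del : R, 0 < del &
    forall (n : nat) (ak bk : nat -> R),
      (forall k, (k < n)%N -> a <= ak k /\ ak k <= bk k /\ bk k <= b) ->
      (forall k l, (k < l)%N -> (l < n)%N -> bk k <= ak l) ->
      \sum_(k < n) (bk k - ak k) < del ->
      \sum_(k < n) `|f (bk k) - f (ak k)| < e.

Definition AC_curve (g : R -> config R N d) (a b : R) : Prop :=
  forall i k, abs_cont_on (fun t => g t i k) a b.

Definition lagr_h (h : R) (x v : config R N d) : \bar R :=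
  ((mnorm v ^+ 2 / 2)%:E + UpotE x + h%:E)%E.

Definition action (h : R) (g : R -> config R N d) (a b : R) : \bar R :=
  (\int[@lebesgue_measure R]_(t in `[a, b]) lagr_h h (g t) (vel g t))%E.

Definition phi (h : R) (x y : config R N d) : \bar R :=
  ereal_inf [set A | exists a b (g : R -> config R N d),
     [/\ a < b, AC_curve g a b, g a = x, g b = y & A = action h g a b]].

Definition geodesic_ray (h : R) (g : R -> config R N d) : Prop :=
  0 <= h /\
  (forall t, 0 <= t -> Omega (g t)) /\
  (forall s t, 0 <= s -> s < t ->
     AC_curve g s t /\ action h g s t = phi h (g s) (g t)).

Definition newton_sol (g : R -> config R N d) (I : set R) : Prop :=
  forall t, I t ->
    Omega (g t) /\
    (forall i k, derivable (fun s => g s i k) t 1 /\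
                 derivable (derive1 (fun s => g s i k)) t 1) /\
    acc g t = gradU (g t).

Definition energy (x v : config R N d) : R := mnorm v ^+ 2 / 2 - Upot x.

(* GR: data (x,v) in T Omega whose maximal classical solution is a geodesic
   ray (of energy h = energy x v).  The maximal solution is defined on an open
   interval containing 0; it is a geodesic ray iff it is defined on some
   (-eps, oo) and its restriction to [0,oo) is a geodesic ray. *)
Definition GR : set (config R N d * config R N d) :=
  [set xv | Omega xv.1 /\
     exists2 eps : R, 0 < eps &
     exists g : R -> config R N d,
       [/\ g 0 = xv.1, vel g 0 = xv.2,
           newton_sol g [set t | - eps < t] &
           geodesic_ray (energy xv.1 xv.2) g]].

End NBody.

From HB Require Import structures.
From mathcomp Require Import all_boot all_order all_algebra.
From mathcomp Require Import all_classical all_reals all_analysis.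
Import Order.TTheory GRing.Theory Num.Theory.
Import numFieldNormedType.Exports.
Local Open Scope classical_set_scope.
Local Open Scope ring_scope.

(* Along a geodesic ray the energy h is nonnegative, so U(x_n) <= |v_n|^2 / 2,
   and the velocities converge, so U(x_n) stays bounded.  A single term of U
   gives m_i m_j <= |x_{n,i} - x_{n,j}| |v_n|^2 / 2; if the limit had a
   collision x_{0,i} = x_{0,j}, the right-hand side would tend to 0 while the
   left-hand side is positive. *)

Lemma cvg_sumr (R : numFieldType) (T : Type) (F : set_system T) {FF : Filter F}
    (I : finType) (f : I -> T -> R) (a : I -> R) :
  (forall i, f i @ F --> a i) ->
  (fun t => \sum_i f i t) @ F --> \sum_i a i.
Proof.
move=> f_cvg; apply: (@cvg_big R^o I +%R 0 xpredT) => //.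
exact: add_continuous.
Qed.

Section NBody.
Context {R : realType} {N d : nat} {m : 'I_N -> R}.

Lemma edot_self_ge0 (a : 'I_d -> R) : 0 <= edot a a.
Proof. by apply: sumr_ge0 => k _; rewrite -expr2 sqr_ge0. Qed.

Lemma edot_self_eq0 (a : 'I_d -> R) : (edot a a == 0) = (a == (fun _ => 0)).
Proof.
rewrite /edot psumr_eq0 => [|k _]; last by rewrite -expr2 sqr_ge0.
apply/allP/eqP => [a0 | -> k _]; last by rewrite /= mulr0.
by apply: funext => k; apply/eqP; rewrite -sqrf_eq0 expr2 (implyP (a0 k _)).
Qed.

Lemma dist_ijC (x : config R N d) (i j : 'I_N) : dist_ij x i j = dist_ij x j i.
Proof.
rewrite /dist_ij /enorm /edot; congr Num.sqrt; apply: eq_bigr => k _.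
by rewrite -mulrNN !opprB.
Qed.

Lemma dist_ij_eq0 (x : config R N d) (i j : 'I_N) :
  (dist_ij x i j == 0) = (x i == x j).
Proof.
rewrite /dist_ij /enorm sqrtr_eq0 le_eqVlt ltNge edot_self_ge0 orbF.
rewrite edot_self_eq0; apply/eqP/eqP => [xij0 | ->].
- by apply: funext => k; apply/eqP; rewrite -subr_eq0 (congr1 (@^~ k) xij0).
- by apply: funext => k; rewrite subrr.
Qed.

Lemma dist_ij_gt0 (x : config R N d) (i j : 'I_N) :
  Omega x -> i != j -> 0 < dist_ij x i j.
Proof.
move=> Ox neq_ij; rewrite lt_def dist_ij_eq0 Ox //.
exact: sqrtr_ge0.
Qed.

Lemma cvg_edot (a b : nat -> 'I_d -> R) (a0 b0 : 'I_d -> R) :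
  (forall k, (fun n => a n k) @ \oo --> a0 k) ->
  (forall k, (fun n => b n k) @ \oo --> b0 k) ->
  (fun n => edot (a n) (b n)) @ \oo --> edot a0 b0.
Proof. by move=> a_cvg b_cvg; apply: cvg_sumr => k; exact: cvgM. Qed.

Lemma cvg_mnorm (vs : nat -> config R N d) (v0 : config R N d) :
  (forall i k, (fun n => vs n i k) @ \oo --> v0 i k) ->
  (fun n => mnorm m (vs n)) @ \oo --> mnorm m v0.
Proof.
move=> vs_cvg; apply: continuous_cvg; first exact: sqrt_continuous.
by apply: cvg_sumr => i; apply: cvgMl_tmp; exact: cvg_edot.
Qed.

Lemma cvg_dist_ij (xs : nat -> config R N d) (x0 : config R N d) (i j : 'I_N) :
  (forall i k, (fun n => xs n i k) @ \oo --> x0 i k) ->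
  (fun n => dist_ij (xs n) i j) @ \oo --> dist_ij x0 i j.
Proof.
move=> xs_cvg; apply: continuous_cvg; first exact: sqrt_continuous.
by apply: cvg_edot => k; exact: cvgB.
Qed.

Lemma Upot_ge_pair (x : config R N d) (i j : 'I_N) :
  (forall l, 0 <= m l) -> i != j -> m i * m j / dist_ij x i j <= Upot m x.
Proof.
move=> m_ge0 neq_ij; wlog lt_ij : i j neq_ij / (i < j)%N => [pair_le|].
  move: (neq_ij); rewrite neq_ltn => /orP[lt_ij | lt_ji]; first exact: pair_le.
  by rewrite [m i * _]mulrC dist_ijC pair_le // eq_sym.
have term_ge0 (k l : 'I_N) : 0 <= m k * m l / dist_ij x k l.
  by rewrite divr_ge0 ?mulr_ge0 ?sqrtr_ge0.
rewrite /Upot (bigD1 i) //= (bigD1 j) //= -addrA lerDl.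
by rewrite addr_ge0 ?sumr_ge0 // => k _; rewrite sumr_ge0.
Qed.

Lemma GR_Upot_le (x v : config R N d) :
  GR m (x, v) -> Upot m x <= mnorm m v ^+ 2 / 2.
Proof. by case=> _ [_ _ [g [_ _ _ [h_ge0 _]]]]; rewrite -subr_ge0. Qed.

End NBody.

Theorem lemma3p1 (R : realType) (N d : nat) (m : 'I_N -> R)
  (hd : (2 <= d)%N) (hm : forall i, 0 < m i)
  (xs vs : nat -> config R N d) (x0 v0 : config R N d) :
  (forall n, GR m (xs n, vs n)) ->
  (forall i k, (fun n => xs n i k) @ \oo --> x0 i k) ->
  (forall i k, (fun n => vs n i k) @ \oo --> v0 i k) ->
  Omega x0.
Proof.
move=> GR_xvs xs_cvg vs_cvg i j neq_ij; apply/negP; rewrite -dist_ij_eq0.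
move=> /eqP dist0.
have m_ge0 l : 0 <= m l by exact: ltW.
have dist_cvg0 : (fun n => dist_ij (xs n) i j) @ \oo --> 0.
  by rewrite -dist0; exact: cvg_dist_ij.
have energy_cvg : (fun n => mnorm m (vs n) ^+ 2 / 2) @ \oo --> mnorm m v0 ^+ 2 / 2.
  by apply: cvgMr_tmp; apply: cvgM; exact: cvg_mnorm.
have mij_le n : m i * m j <= dist_ij (xs n) i j * (mnorm m (vs n) ^+ 2 / 2).
  have [Oxs _] := GR_xvs n.
  rewrite -ler_pdivrMl ?dist_ij_gt0 // mulrC.
  exact: le_trans (Upot_ge_pair (xs n) i j m_ge0 neq_ij) (GR_Upot_le _ _ (GR_xvs n)).
have bound_cvg0 : (fun n => dist_ij (xs n) i j * (mnorm m (vs n) ^+ 2 / 2)) @ \oo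
    --> 0 * (mnorm m v0 ^+ 2 / 2) by exact: cvgM.
have : m i * m j <= 0 * (mnorm m v0 ^+ 2 / 2).
  by apply: (cvgr_to_ge bound_cvg0); exact: nearW.
by rewrite mul0r leNgt mulr_gt0.
Qed.
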